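(* Let $K\ge1$, let $\pi$ be a probability distribution on $\mathbb{X}$ and $\tau(\mathrm{d}h\mid x)$ hold-time distributions on $(0,\infty)$ with survival function $\bar F_\tau(h\mid x)$, such that $H>\epsilon$ almost surely under each $\tau(\cdot\mid x)$ for a fixed $\epsilon>0$ and $\sup_x\mathbb{E}_\tau[H\mid x]<\infty$. Let $(X^{1:K+1},L)$ be distributed according to \[ A(\mathrm{d}x^{1:K+1},\mathrm{d}l)=\frac{\bar F_{\tau}(l\mid x^{K+1})}{\mathbb{E}_{\tau}[H]}\,\mathrm{d}l\prod_{k=1}^{K+1}\pi(\mathrm{d}x^{k}),\qquad l\ge0, \] with $\mathbb{E}_{\tau}[H]=\int\mathbb{E}_{\tau}[H\mid x]\pi(\mathrm{d}x)$. Then the conditional distribution of $X^{1:K+1}$ given $L<\epsilon$ is $\Pi(\mathrm{d}x^{1:K+1})=\prod_{k=1}^{K+1}\pi(\mathrm{d}x^k)$.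
   Context: $A$ is the stationary distribution of the real-time Markov jump process of $K+1$ Markov chains (each with invariant distribution $\pi$) simulated serially on one processor, where the chain being simulated has state $x^{K+1}$, a transition from state $x$ takes real time distributed as $\tau(\cdot\mid x)$, states are rotated after each transition, and $L$ is the time elapsed since the last transition. *)

From HB Require Import structures.
From mathcomp Require Import all_boot all_order all_algebra.
From mathcomp Require Import all_classical all_reals all_analysis.
Set Implicit Arguments. Unset Strict Implicit. Unset Printing Implicit Defensive.
Import Order.TTheory GRing.Theory Num.Theory.
Local Open Scope classical_set_scope.
Local Open Scope ring_scope.
Local Open Scope ereal_scope.

(* Integral of f : n.-tuple X -> \bar R against the n-fold product pi^{(x)n},
   computed as the iterated integral  \int pi(dx_1) ... \int pi(dx_n) f(x_1..x_n). *)
Fixpoint tuple_int {d} {X : measurableType d} {R : realType}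
  (pi : probability X R) (n : nat) : (n.-tuple X -> \bar R) -> \bar R :=
  match n with
  | 0 => fun f => f [tuple]
  | m.+1 => fun f => \int[pi]_x tuple_int pi (fun t : m.-tuple X => f (cons_tuple x t))
  end.

Definition prod_prob {d} {X : measurableType d} {R : realType}
  (pi : probability X R) (n : nat) (B : set (n.-tuple X)) : \bar R :=
  tuple_int pi (fun t => (\1_B t)%:E).

Definition survival {d} {X : measurableType d} {R : realType}
  (tau : R.-pker X ~> R) (h : R) (x : X) : \bar R := tau x `]h, +oo[%classic.

Definition mean_hold {d} {X : measurableType d} {R : realType}
  (tau : R.-pker X ~> R) (x : X) : \bar R := \int[tau x]_h h%:E.

Definition mean_hold_pi {d} {X : measurableType d} {R : realType}
  (pi : probability X R) (tau : R.-pker X ~> R) : \bar R :=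
  \int[pi]_x mean_hold tau x.

Definition measA {d} {X : measurableType d} {R : realType}
  (pi : probability X R) (tau : R.-pker X ~> R) (K : nat)
  (C : set (K.+1.-tuple X * R)) : \bar R :=
  tuple_int pi (fun t : K.+1.-tuple X =>
    \int[lebesgue_measure]_(l in `[0%R, +oo[%classic)
       ((\1_C (t, l))%:E * survival tau l (tnth t ord_max)
          * (mean_hold_pi pi tau)^-1)).

From HB Require Import structures.
From mathcomp Require Import all_boot all_order all_algebra.
From mathcomp Require Import all_classical all_reals all_analysis.
From mathcomp Require Import measurable_realfun.
Import Order.TTheory GRing.Theory Num.Theory.
Local Open Scope classical_set_scope.
Local Open Scope ring_scope.
Local Open Scope ereal_scope.
Import HBNNSimple.

(* Under A, the density of the hold L given x^{1:K+1} is
   F_tau(l | x^{K+1}) / E_tau[H], and every hold exceeds eps, so this density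
   is the constant 1 / E_tau[H] on [0, eps[.  Hence
   A(B x [0, eps[) = Pi(B) eps / E_tau[H] for every B; taking B the whole space
   gives the normalising constant eps / E_tau[H], which is positive and finite
   because eps <= E_tau[H] <= sup_x E_tau[H | x]. *)

(* The iterated integrals over tuples are not known to be measurable, so we
   need monotonicity and homogeneity of the integral of nonnegative functions
   without measurability: it is a supremum over simple minorants, and scaling
   by [c > 0] permutes those minorants. *)
Section ge0_integral_nonmeasurable.
Context d (T : measurableType d) (R : realType).
Variable mu : {measure set T -> \bar R}.

Lemma ge0_le_integral_nonmeas (f g : T -> \bar R) :
  (forall x, 0 <= f x) -> (forall x, f x <= g x) ->
  \int[mu]_x f x <= \int[mu]_x g x.
Proof.
move=> f0 fg; have g0 x : 0 <= g x by exact: le_trans (f0 x) (fg x).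
rewrite !ge0_integralTE//; apply: ge_ereal_sup => _ [h hf <-].
by apply: ereal_sup_ubound; exists h => // x; exact: le_trans (hf x) (fg x).
Qed.

Lemma ge0_integralZl_le_nonmeas (f : T -> \bar R) (c : R) :
  (0 < c)%R -> (forall x, 0 <= f x) ->
  \int[mu]_x (c%:E * f x) <= c%:E * \int[mu]_x f x.
Proof.
move=> c_gt0 f0; have cf0 x : 0 <= c%:E * f x by rewrite mule_ge0// lee_fin ltW.
rewrite ge0_integralTE//; apply: ge_ereal_sup => _ [h hcf <-].
have cV_ge0 : (0 <= c^-1)%R by rewrite invr_ge0 ltW.
pose hc := scale_nnsfun h cV_ge0.
have -> : sintegral mu h = c%:E * sintegral mu hc.
  rewrite -sintegralrM; apply: eq_sintegral => x /=.
  by rewrite mulrA divff ?gt_eqF ?mul1r.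
rewrite lee_pmul2l ?lte_fin// ge0_integralTE//.
by apply: ereal_sup_ubound; exists hc => // x /=; rewrite EFinM lee_pdivrMl.
Qed.

Lemma ge0_integralZl_nonmeas (f : T -> \bar R) (c : R) :
  (0 <= c)%R -> (forall x, 0 <= f x) ->
  \int[mu]_x (c%:E * f x) = c%:E * \int[mu]_x f x.
Proof.
move=> c_ge0 f0; have [->|c_neq0] := eqVneq c 0%R.
  by rewrite mul0e integral0_eq// => x _; rewrite mul0e.
have c_gt0 : (0 < c)%R by rewrite lt_def c_neq0.
apply/le_anti; rewrite ge0_integralZl_le_nonmeas//=.
have cf0 x : 0 <= c%:E * f x by rewrite mule_ge0// lee_fin.
have cV_gt0 : (0 < c^-1)%R by rewrite invr_gt0.
rewrite -lee_pdivlMl//.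
apply: le_trans (ge0_integralZl_le_nonmeas (fun x => c%:E * f x) _ cV_gt0 cf0).
by apply: ge0_le_integral_nonmeas => // x; rewrite muleA -EFinM mulVf ?mul1e.
Qed.

End ge0_integral_nonmeasurable.

Section tuple_int.
Context {d} {X : measurableType d} {R : realType} (pi : probability X R).

Lemma probability_integral_cst (c : \bar R) : \int[pi]_x c = c.
Proof.
by rewrite integral_cst// -[X in _ * X]/(pi setT) probability_setT mule1.
Qed.

Lemma tuple_int_ge0 n (f : n.-tuple X -> \bar R) :
  (forall t, 0 <= f t) -> 0 <= tuple_int pi f.
Proof.
elim: n f => [|n IHn] f f0 /=; first exact: f0.
by apply: integral_ge0 => x _; exact: IHn.
Qed.

Lemma tuple_int_cst n (c : \bar R) : tuple_int pi (fun _ : n.-tuple X => c) = c.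
Proof. by elim: n => [|n IHn] //=; rewrite IHn probability_integral_cst. Qed.

Lemma tuple_intZl n (f : n.-tuple X -> \bar R) (c : R) :
  (0 <= c)%R -> (forall t, 0 <= f t) ->
  tuple_int pi (fun t => c%:E * f t) = c%:E * tuple_int pi f.
Proof.
move=> c_ge0; elim: n f => [|n IHn] f f0 //=.
under eq_integral do rewrite IHn//.
by rewrite ge0_integralZl_nonmeas// => x; exact: tuple_int_ge0.
Qed.

Lemma prod_probT n : prod_prob pi [set: n.-tuple X] = 1.
Proof.
by rewrite /prod_prob (_ : (fun _ => _) = cst 1) ?tuple_int_cst// funeqE => t;
  rewrite indicT.
Qed.

End tuple_int.

Lemma le_integral_id_of_support (R : realType) (mu : {measure set R -> \bar R})
    (eps : R) :
  (0 <= eps)%R -> mu setT = 1 -> mu `]eps, +oo[%classic = 1 ->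
  eps%:E <= \int[mu]_h h%:E.
Proof.
move=> eps_ge0 muT mu_supp.
have mu_out : mu (~` `]eps, +oo[%classic) = 0.
  have muT_lt : mu [set: R] < +oo by rewrite muT ltry.
  rewrite -setTD measureD// setTI -(subee (x := 1))//.
  by congr (_ - _); [exact: muT | exact: mu_supp].
have m_max : measurable_fun [set: R] (EFin \o (fun h : R => Num.max h eps)).
  by apply/measurable_EFinP; apply: measurable_maxr.
rewrite (ae_eq_integral (EFin \o (fun h : R => Num.max h eps)))//; last first.
  exists (~` `]eps, +oo[%classic); split; [exact: measurableC | by [] |].
  move=> h /= heq; apply: contra_not heq => h_in _.
  by rewrite max_l// ltW//; move: h_in; rewrite /= in_itv/= andbT.
rewrite -[leLHS]mule1 -muT -integral_cst//.
by apply: ge0_le_integral => // h _; rewrite lee_fin le_max lexx orbT.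
Qed.

Lemma integral_Zl_indic_co0 (R : realType) (eps k : R) :
  (0 < eps)%R -> (0 <= k)%R ->
  \int[lebesgue_measure]_(l in `[0%R, +oo[%classic)
     (k * \1_`[0%R, eps[%classic l)%R%:E = (k * eps)%:E.
Proof.
move=> eps_gt0 k_ge0.
have := @integralZl_indic _ _ _ lebesgue_measure _ (measurable_itv `[0%R, +oo[)
  (fun=> `[0%R, eps[%classic) k.
rewrite /= => ->//; last by rewrite ltNge k_ge0.
rewrite integral_indic// setIidl => [|l]; last first.
  by rewrite /= !in_itv/= => /andP[->].
have leb_eps : lebesgue_measure (`[0%R, eps[%classic : set R) = eps%:E.
  by rewrite lebesgue_measure_itv/= lte_fin eps_gt0 sube0.
by rewrite [X in _ * X](_ : _ = eps%:E) ?leb_eps// -EFinM.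
Qed.

Section hold_time.
Context {d} {X : measurableType d} {R : realType}.
Variables (tau : R.-pker X ~> R) (eps : R).
Hypothesis tau_supp : forall x, tau x `]eps, +oo[%classic = 1.

Lemma survival_lt_eq1 l x : (l < eps)%R -> survival tau l x = 1.
Proof.
move=> l_lt_eps; apply/le_anti/andP; split.
  by rewrite -(prob_kernel (s := tau) x); apply: le_measure; rewrite ?inE.
rewrite -[leLHS](tau_supp x); apply: le_measure; rewrite ?inE// => h /=.
by rewrite !in_itv/= !andbT; exact: lt_trans.
Qed.

Lemma mean_hold_pi_gt0_fin (pi : probability X R) (M : R) :
  (0 < eps)%R -> (forall x, mean_hold tau x <= M%:E) ->
  exists2 m : R, mean_hold_pi pi tau = m%:E & (0 < m)%R.
Proof.
move=> eps_gt0 le_M.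
have ge_eps x : eps%:E <= mean_hold tau x.
  by apply: le_integral_id_of_support; rewrite ?ltW// prob_kernel.
have eps_le : eps%:E <= mean_hold_pi pi tau.
  rewrite -[leLHS](probability_integral_cst pi).
  by apply: ge0_le_integral_nonmeas => // x; rewrite lee_fin ltW.
have le_M' : mean_hold_pi pi tau <= M%:E.
  rewrite -[leRHS](probability_integral_cst pi).
  apply: ge0_le_integral_nonmeas => // x.
  by rewrite (le_trans _ (ge_eps x))// lee_fin ltW.
have fin : mean_hold_pi pi tau \is a fin_num.
  rewrite fin_numElt (lt_le_trans _ eps_le) ?ltNyr//.
  by rewrite (le_lt_trans le_M') ?ltry.
exists (fine (mean_hold_pi pi tau)); first by rewrite fineK.
by rewrite -lte_fin fineK// (lt_le_trans _ eps_le)// lte_fin.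
Qed.

Section short_hold.
Variables (pi : probability X R) (K : nat) (B : set (K.+1.-tuple X)) (m : R).
Hypotheses (eps_gt0 : (0 < eps)%R) (mean_hold_piE : mean_hold_pi pi tau = m%:E)
  (m_gt0 : (0 < m)%R).
Let E := [set tl : K.+1.-tuple X * R | (tl.2 < eps)%R].

Lemma indic_setX_short_hold t l : (0 <= l)%R ->
  \1_(B `*` setT `&` E) (t, l) = (\1_B t * \1_`[0%R, eps[%classic l)%R :> R.
Proof.
move=> l_ge0; rewrite indicI /=; congr (_ * _)%R; rewrite !indicE.
  by rewrite in_setX in_setT andbT.
congr ((_ : bool)%:R)%R; apply/idP/idP => /set_mem/= h; apply/mem_set.
  by rewrite /= in_itv/= l_ge0.
by move: h; rewrite /= in_itv/= l_ge0.
Qed.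

Lemma short_hold_density t :
  \int[lebesgue_measure]_(l in `[0%R, +oo[%classic)
     ((\1_(B `*` setT `&` E) (t, l))%:E * survival tau l (tnth t ord_max)
        * (mean_hold_pi pi tau)^-1) =
  \int[lebesgue_measure]_(l in `[0%R, +oo[%classic)
     ((m^-1 * \1_B t) * \1_`[0%R, eps[%classic l)%R%:E.
Proof.
apply: eq_integral => l; rewrite inE/= in_itv/= andbT => l_ge0.
rewrite mean_hold_piE inver gt_eqF// indic_setX_short_hold//.
have [l_lt|l_ge] := ltP l eps.
  by rewrite survival_lt_eq1// mule1 -EFinM mulrC mulrA.
have -> : \1_`[0%R, eps[%classic l = 0%R :> R.
  by rewrite indicE memNset// /= in_itv/= l_ge0 ltNge l_ge.
by rewrite !mulr0 !mul0e.
Qed.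

Lemma measA_short_hold :
  measA pi tau (B `*` setT `&` E) = (eps / m)%:E * prod_prob pi B.
Proof.
rewrite /measA /prod_prob -tuple_intZl ?divr_ge0 ?ltW//.
congr tuple_int; apply/funext => t.
rewrite short_hold_density integral_Zl_indic_co0 ?mulr_ge0// ?invr_ge0 ?ltW//.
by rewrite -EFinM mulrAC (mulrC m^-1%R).
Qed.

End short_hold.

End hold_time.

Theorem corollary7 (d : measure_display) (X : measurableType d) (R : realType)
  (K : nat) (pi : probability X R) (tau : R.-pker X ~> R) (eps : R) :
  (1 <= K)%N ->
  (0 < eps)%R ->
  (forall x : X, tau x `]eps, +oo[%classic = 1) ->
  (exists M : R, forall x : X, mean_hold tau x <= M%:E) ->
  let E := [set tl : K.+1.-tuple X * R | (tl.2 < eps)%R] in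
  0 < measA pi tau E < +oo /\
  forall B : set (K.+1.-tuple X), measurable B ->
    measA pi tau (B `*` setT `&` E) * (measA pi tau E)^-1 = prod_prob pi B.
Proof.
(* The identity holds for every K, including K = 0. *)
move=> _ eps_gt0 tau_supp [M le_M] E.
have [m hm m_gt0] := mean_hold_pi_gt0_fin _ _ tau_supp pi _ eps_gt0 le_M.
have measA_BE B : measA pi tau (B `*` setT `&` E) = (eps / m)%:E * prod_prob pi B.
  exact: measA_short_hold.
have c_gt0 : (0 < eps / m)%R by rewrite divr_gt0.
have mE : measA pi tau E = (eps / m)%:E.
  by rewrite -[E]setTI -setXTT measA_BE prod_probT mule1.
split; first by rewrite mE lte_fin c_gt0 ltry.
move=> B _; rewrite measA_BE mE muleAC inver gt_eqF// -EFinM divff ?gt_eqF//.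
by rewrite mul1e.
Qed.
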